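(* Let $\varphi\colon E\to E$ be the homomorphism with $\varphi(e_1)=-e_1$ and $\varphi(e_n)=-e_n+2e_1e_n$ for $n>1$. Then $\varphi$ is an automorphism of order 2, and $E_\varphi$ is $\mathbb{Z}_2$-isomorphic to $E_{can}$.
   Context: $F$ is a field of characteristic zero, $L$ an infinite-dimensional $F$-vector space with basis $e_1,e_2,\ldots$, $E$ its Grassmann algebra. $E_\varphi$ is the $\mathbb{Z}_2$-grading on $E$ by eigenspaces of $\varphi$ for $1$ (degree 0) and $-1$ (degree 1). $E_{can}=E_{(0)}\oplus E_{(1)}$ is the natural grading: $E_{(0)}$ spanned by $1$ and monomials of even length, $E_{(1)}$ by monomials of odd length. $\mathbb{Z}_2$-isomorphic means isomorphic via an algebra isomorphism preserving degree components. *)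

From HB Require Import structures.
From mathcomp Require Import all_boot all_order all_algebra.
Set Implicit Arguments. Unset Strict Implicit. Unset Printing Implicit Defensive.
Import Order.TTheory GRing.Theory Num.Theory.
Local Open Scope ring_scope.

Definition grass_mono (F : fieldType) (A : algType F) (e : nat -> A)
  (s : seq nat) : A := \prod_(i <- s) e i.

Definition incr_seq (s : seq nat) : bool := sorted ltn s.

Definition in_mono_span (F : fieldType) (A : algType F) (e : nat -> A)
  (P : seq nat -> bool) (x : A) : Prop :=
  exists (ss : seq (seq nat)) (c : seq nat -> F),
    all incr_seq ss /\ all P ss /\ x = \sum_(s <- ss) c s *: grass_mono e s.

(* (A, e) is the Grassmann algebra of the vector space with basis
   e_0, e_1, e_2, ...: the generators anticommute, square to zero, and the
   standard monomials (incl. the empty one, = 1) form an F-basis of A. *)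
Definition is_grassmann (F : fieldType) (A : algType F) (e : nat -> A) : Prop :=
  [/\ (forall i j, e i * e j = - (e j * e i)),
      (forall i, e i * e i = 0),
      (forall x : A, in_mono_span e predT x) &
      (forall (ss : seq (seq nat)) (c : seq nat -> F),
          uniq ss -> all incr_seq ss ->
          \sum_(s <- ss) c s *: grass_mono e s = 0 ->
          forall s, s \in ss -> c s = 0)].

Definition is_alg_hom (F : fieldType) (A : algType F) (f : A -> A) : Prop :=
  [/\ (forall (a : F) (x y : A), f (a *: x + y) = a *: f x + f y),
      (forall x y : A, f (x * y) = f x * f y) &
      f 1 = 1].

(* Natural grading E_can = E_(0) (+) E_(1). *)
Definition grass_even (F : fieldType) (A : algType F) (e : nat -> A) (x : A) : Prop :=
  in_mono_span e (fun s => ~~ odd (size s)) x.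
Definition grass_odd (F : fieldType) (A : algType F) (e : nat -> A) (x : A) : Prop :=
  in_mono_span e (fun s => odd (size s)) x.

From HB Require Import structures.
From mathcomp Require Import all_boot all_order all_algebra.
Import Order.TTheory GRing.Theory Num.Theory.
Local Open Scope ring_scope.
Set Implicit Arguments. Unset Strict Implicit.

(* Put a := e_1.  Since a^2 = 0, h := 1 + a/2 is a unit with inverse 1 - a/2,
   and phi is conjugate, via x |-> h x h^-1, to the automorphism negating every
   generator: conjugation by h^-1 fixes a and sends e_n to e_n - a e_n, which
   phi maps to -e_n + a e_n, the image of -e_n under conjugation by h^-1.  An
   automorphism negating every generator acts by (-1)^k on monomials of length
   k, so it is the involution with eigenspaces E_(0) (for 1) and E_(1) (for -1).
   Hence phi is an involution, and x |-> h x h^-1 is a graded isomorphism from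
   E_phi onto E_can. *)

Section AlgHom.
Variables (F : fieldType) (A : algType F) (f : A -> A).
Hypothesis hf : is_alg_hom f.

Lemma alg_homD x y : f (x + y) = f x + f y.
Proof. by case: hf => fL _ _; have := fL 1 x y; rewrite !scale1r. Qed.

Lemma alg_hom0 : f 0 = 0.
Proof. by apply: (@addrI _ (f 0)); rewrite -alg_homD !addr0. Qed.

Lemma alg_homZ a x : f (a *: x) = a *: f x.
Proof. by case: hf => fL _ _; have := fL a x 0; rewrite !addr0 alg_hom0 addr0. Qed.

Lemma alg_homN x : f (- x) = - f x.
Proof. by rewrite -scaleN1r alg_homZ scaleN1r. Qed.

Lemma alg_homB x y : f (x - y) = f x - f y.
Proof. by rewrite alg_homD alg_homN. Qed.

Lemma alg_homM x y : f (x * y) = f x * f y.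
Proof. by case: hf. Qed.

Lemma alg_hom1 : f 1 = 1.
Proof. by case: hf. Qed.

Lemma alg_hom_sum (I : Type) (r : seq I) (G : I -> A) :
  f (\sum_(i <- r) G i) = \sum_(i <- r) f (G i).
Proof.
by elim: r => [|i r IH]; rewrite ?big_nil ?alg_hom0 // !big_cons alg_homD IH.
Qed.

Lemma alg_hom_prod (I : Type) (r : seq I) (G : I -> A) :
  f (\prod_(i <- r) G i) = \prod_(i <- r) f (G i).
Proof.
by elim: r => [|i r IH]; rewrite ?big_nil ?alg_hom1 // !big_cons alg_homM IH.
Qed.

End AlgHom.

Lemma alg_hom_comp (F : fieldType) (A : algType F) (f g : A -> A) :
  is_alg_hom f -> is_alg_hom g -> is_alg_hom (f \o g).
Proof.
move=> hf hg; split=> [a x y|x y|] /=.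
- by rewrite (alg_homD hg) (alg_homZ hg) (alg_homD hf) (alg_homZ hf).
- by rewrite (alg_homM hg) (alg_homM hf).
- by rewrite (alg_hom1 hg) (alg_hom1 hf).
Qed.

Lemma eq_selfN (F : fieldType) (V : lmodType F) (v : V) :
  (2%:R : F) != 0 -> (v == - v) = (v == 0).
Proof.
by move=> two; rewrite -addr_eq0 -mulr2n -scaler_nat scaler_eq0 (negbTE two).
Qed.

Section UnipotentConjugation.
Variables (F : fieldType) (A : algType F) (a : A).
Hypothesis a2 : a * a = 0.

Definition conj_unip (k : F) (x : A) : A := (1 + k *: a) * x * (1 - k *: a).

Lemma unip_mulrV k : (1 + k *: a) * (1 - k *: a) = 1.
Proof.
by rewrite mulrDl mul1r mulrBr mulr1 -scalerAl -scalerAr a2 !scaler0 subr0 subrK.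
Qed.

Lemma unip_mulVr k : (1 - k *: a) * (1 + k *: a) = 1.
Proof. by have := unip_mulrV (- k); rewrite !scaleNr opprK. Qed.

Lemma conj_unip_alg_hom k : is_alg_hom (conj_unip k).
Proof.
rewrite /conj_unip; split=> [c x y|x y|].
- by move: (1 + _) (1 - _) => u v; rewrite mulrDr mulrDl -scalerAr -scalerAl.
- by rewrite -!mulrA (mulrA (1 - k *: a)) unip_mulVr mul1r.
- by rewrite mulr1 unip_mulrV.
Qed.

Lemma conj_unipK k : cancel (conj_unip k) (conj_unip (- k)).
Proof.
move=> x; rewrite /conj_unip scaleNr opprK.
by rewrite !mulrA unip_mulVr mul1r -mulrA unip_mulVr mulr1.
Qed.

Lemma conj_unipNK k : cancel (conj_unip (- k)) (conj_unip k).
Proof. by move=> x; rewrite -[in RHS](conj_unipK (- k) x) opprK. Qed.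

Lemma conj_unip_anti k x : x * a = - (a * x) ->
  conj_unip k x = x + (k + k) *: (a * x).
Proof.
move=> xa; rewrite /conj_unip mulrDl mul1r mulrBr mulr1 mulrDl -!scalerAl -!scalerAr.
have -> : a * x * a = 0 by rewrite -mulrA xa mulrN mulrA a2 mul0r oppr0.
by rewrite !scaler0 addr0 xa scalerN opprK scalerDl addrA.
Qed.

Lemma conj_unip_fix k : conj_unip k a = a.
Proof. by rewrite conj_unip_anti a2 ?oppr0 // scaler0 addr0. Qed.

Variables (c : F) (phi : A -> A).
Hypotheses (cc : c + c = 1) (hphi : is_alg_hom phi) (phi_a : phi a = - a).

Lemma conj_unip_twist_self :
  conj_unip c (phi (conj_unip (- c) a)) = - a.
Proof.
by rewrite conj_unip_fix phi_a (alg_homN (conj_unip_alg_hom c)) conj_unip_fix.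
Qed.

Lemma conj_unip_twist_anti b :
  b * a = - (a * b) -> phi b = - b + 2%:R * (a * b) ->
  conj_unip c (phi (conj_unip (- c) b)) = - b.
Proof.
move=> ba phi_b.
have aab : a * (a * b) = 0 by rewrite mulrA a2 mul0r.
have phi_ab : phi (a * b) = a * b.
  by rewrite (alg_homM hphi) phi_a phi_b mulNr mulrDr mulrN mulr_natl mulrnAr aab
    mul0rn addr0 opprK.
have -> : conj_unip (- c) b = b - a * b.
  by rewrite conj_unip_anti // -opprD cc scaleN1r.
rewrite (alg_homB hphi) phi_ab phi_b.
have -> : - b + 2%:R * (a * b) - a * b = - b + a * b.
  by rewrite mulr_natl mulr2n addrA addrK.
rewrite conj_unip_anti; last first.
  rewrite mulrDl mulNr ba opprK -mulrA ba mulrN aab oppr0 addr0.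
  by rewrite mulrDr mulrN aab addr0 opprK.
by rewrite cc scale1r mulrDr mulrN aab addr0 addrK.
Qed.

End UnipotentConjugation.

Section SignAutomorphism.
Variables (F : fieldType) (A : algType F) (e : nat -> A) (g : A -> A).
Hypotheses (hg : is_alg_hom g) (g_gen : forall i, g (e i) = - e i).

Lemma sign_mono s : g (grass_mono e s) = (-1) ^+ size s *: grass_mono e s.
Proof.
rewrite /grass_mono (alg_hom_prod hg).
elim: s => [|i s IH]; first by rewrite !big_nil expr0 scale1r.
by rewrite !big_cons g_gen IH mulNr -scalerAr exprS mulN1r scaleNr.
Qed.

Lemma sign_even y : grass_even e y -> g y = y.
Proof.
case=> ss [c [_ [evenP ->]]]; rewrite (alg_hom_sum hg); apply: eq_big_seq => s s_ss.
rewrite (alg_homZ hg) sign_mono -signr_odd.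
by rewrite (negbTE (allP evenP s s_ss)) expr0 scale1r.
Qed.

Lemma sign_odd y : grass_odd e y -> g y = - y.
Proof.
case=> ss [c [_ [oddP ->]]]; rewrite (alg_hom_sum hg) -sumrN.
apply: eq_big_seq => s s_ss.
by rewrite (alg_homZ hg) sign_mono -signr_odd (allP oddP s s_ss) expr1 scaleN1r scalerN.
Qed.

Hypothesis grassE : is_grassmann e.

Lemma grass_decomp y :
  exists ye yo, [/\ y = ye + yo, grass_even e ye & grass_odd e yo].
Proof.
case: grassE => _ _ span _; have [ss [c [incr [_ ->]]]] := span y.
pose part (P : pred (seq nat)) := \sum_(s <- ss | P s) c s *: grass_mono e s.
have part_span P : in_mono_span e P (part P).
  exists [seq s <- ss | P s], c; split; last split; last by rewrite big_filter.
  - by apply/allP => s; rewrite mem_filter => /andP[_ /(allP incr)].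
  - exact: filter_all.
exists (part (fun s => ~~ odd (size s))), (part (fun s => odd (size s))).
by split; [rewrite (bigID (fun s => odd (size s))) addrC | exact: part_span..].
Qed.

Lemma signK y : g (g y) = y.
Proof.
have [ye [yo [-> ev od]]] := grass_decomp y.
rewrite [g (ye + yo)](alg_homD hg) (sign_even ev) (sign_odd od).
by rewrite (alg_homB hg) (sign_even ev) (sign_odd od) opprK.
Qed.

Hypothesis two : (2%:R : F) != 0.

Lemma sign_fixE y : g y = y <-> grass_even e y.
Proof.
split=> [gy|]; last exact: sign_even.
have [ye [yo [yE ev od]]] := grass_decomp y.
move: gy; rewrite yE (alg_homD hg) sign_even // sign_odd // => /addrI/eqP.
rewrite eq_sym eq_selfN // => /eqP yo0.
by rewrite yo0 addr0.
Qed.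

Lemma sign_antifixE y : g y = - y <-> grass_odd e y.
Proof.
split=> [gy|]; last exact: sign_odd.
have [ye [yo [yE ev od]]] := grass_decomp y.
move: gy; rewrite yE (alg_homD hg) sign_even // sign_odd // opprD => /addIr/eqP.
rewrite eq_selfN // => /eqP ye0.
by rewrite ye0 add0r.
Qed.

End SignAutomorphism.

Lemma grass_gen_neq0 (F : fieldType) (A : algType F) (e : nat -> A) i :
  is_grassmann e -> e i != 0.
Proof.
case=> _ _ _ indep; apply/eqP => ei0.
have := indep [:: [:: i]] (fun _ => 1) erefl erefl.
rewrite big_seq1 /grass_mono big_seq1 ei0 scaler0 => /(_ erefl [:: i]).
by rewrite mem_seq1 eqxx => /(_ erefl)/eqP; rewrite oner_eq0.
Qed.

Theorem mainTheorem10 (F : fieldType) (A : algType F) (e : nat -> A)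
  (phi : A -> A) :
  [pchar F] =i pred0 ->
  is_grassmann e ->
  is_alg_hom phi ->
  phi (e 0%N) = - e 0%N ->
  (forall n : nat, phi (e n.+1) = - e n.+1 + 2%:R * (e 0%N * e n.+1)) ->
  [/\ bijective phi,
      (forall x, phi (phi x) = x),
      (exists x, phi x <> x) &
      exists psi : A -> A,
        [/\ is_alg_hom psi, bijective psi,
            (forall x, phi x = x <-> grass_even e (psi x)) &
            (forall x, phi x = - x <-> grass_odd e (psi x))]].
Proof.
move=> char0 grassE hphi phi0 phiS.
have two : (2%:R : F) != 0 by have := char0 2%N; rewrite !inE /= => ->.
have cc : (2%:R)^-1 + (2%:R)^-1 = 1 :> F by rewrite -mulr2n -[_ *+ 2]mulr_natl mulfV.
have a2 : e 0%N * e 0%N = 0 by case: grassE.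
pose psi := conj_unip (e 0%N) (2%:R)^-1; pose psi' := conj_unip (e 0%N) (- (2%:R)^-1).
have psiK : cancel psi psi' := conj_unipK a2 _.
have hpsi : is_alg_hom psi := conj_unip_alg_hom a2 _.
pose tau := psi \o phi \o psi'.
have htau : is_alg_hom tau :=
  alg_hom_comp (alg_hom_comp hpsi hphi) (conj_unip_alg_hom a2 _).
have tau_gen i : tau (e i) = - e i.
  case: i => [|n]; first exact: conj_unip_twist_self.
  by apply: conj_unip_twist_anti => //; case: grassE.
have tau_psi x : tau (psi x) = psi (phi x) by rewrite /tau /= psiK.
have phiK x : phi (phi x) = x.
  by apply: (can_inj psiK); rewrite -!tau_psi (signK htau tau_gen grassE).
split=> //.
- by exists phi.
- exists (e 0%N); rewrite phi0 => /eqP; rewrite eq_sym eq_selfN //.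
  by rewrite (negbTE (grass_gen_neq0 _ grassE)).
- exists psi; split=> // [|x|x].
  + by exists psi'; [exact: psiK | exact: conj_unipNK].
  + apply: (iff_trans _ (sign_fixE htau tau_gen grassE two (psi x))).
    by rewrite tau_psi; split=> [->|/(can_inj psiK)].
  + apply: (iff_trans _ (sign_antifixE htau tau_gen grassE two (psi x))).
    by rewrite tau_psi -(alg_homN hpsi); split=> [->|/(can_inj psiK)].
Qed.
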